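(* Let $w\in[0,\infty)^n$, $c\in(0,\infty)^n$, and let $(A_1,\dots,A_k)$ be any Sidney decomposition of $\mathcal G$ (with respect to $w,c$). Then there exist $i\in\{1,\dots,k\}$ and a search whose support is $A_1\cup\dots\cup A_i$ that minimizes $J^+(\cdot\,;w,c)$ over $\mathcal S$.
   Context: $\mathcal G=([n],\mathcal E)$ is a finite directed acyclic graph on $[n]=\{1,\dots,n\}$. A search is a tuple $s=(s_1,\dots,s_k)$ of distinct vertices ($0\le k\le n$) such that every in-neighbor of each $s_i$ belongs to $\{s_1,\dots,s_{i-1}\}$; $\mathcal S$ denotes the set of searches. The support of a search is its underlying (unordered) set; an initial set is the support of a search. For $A\subseteq[n]$, $\mathcal G|_A$ is the induced sub-DAG on $A$. For $w\in[0,\infty)^n$, $c\in(0,\infty)^n$: $J(s;w,c)=\big(\sum_{i=1}^{|s|}c_{s_i}(1-\sum_{j<i}w_{s_j})\big)/\big(\sum_{i=1}^{|s|}w_{s_i}\big)$ if the denominator is positive and $+\infty$ otherwise (in particular for the empty search); $J^+=\max\{0,J\}$ with $\max\{0,+\infty\}=+\infty$. The density of a nonempty $A\subseteq[n]$ is $\rho(A)=\sum_{i\in A}w_i/\sum_{i\in A}c_i$, and $\rho(\emptyset)=0$. A Sidney decomposition is an ordered partition $(A_1,\dots,A_k)$ of $[n]$ into nonempty sets such that, for each $i$, $A_i$ is an initial set of $\mathcal G|_{A_i\cup\dots\cup A_k}$ of maximum density among all initial sets of $\mathcal G|_{A_i\cup\dots\cup A_k}$. *)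

(* Vertices [n] are represented by 'I_n; the DAG by an edge
   relation e : rel 'I_n (e u v means u -> v, i.e. u is an in-neighbor of v). *)
From HB Require Import structures.
From mathcomp Require Import all_boot all_order all_algebra.
Set Implicit Arguments. Unset Strict Implicit. Unset Printing Implicit Defensive.
Import Order.TTheory GRing.Theory Num.Theory.
Local Open Scope ring_scope.

Definition acyclic (n : nat) (e : rel 'I_n) : Prop :=
  forall u v, e u v -> ~~ connect e v u.

Definition search_on (n : nat) (e : rel 'I_n) (B : {set 'I_n}) (s : seq 'I_n) : Prop :=
  [/\ uniq s, all (fun x => x \in B) s &
      forall (s1 : seq 'I_n) (v : 'I_n) (s2 : seq 'I_n), s = s1 ++ v :: s2 ->
        forall u, u \in B -> e u v -> u \in s1].

Definition search (n : nat) (e : rel 'I_n) (s : seq 'I_n) : Prop :=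
  search_on e [set: 'I_n] s.

Definition initial_in (n : nat) (e : rel 'I_n) (B X : {set 'I_n}) : Prop :=
  exists s, search_on e B s /\ [set x in s] = X.

Definition density (R : realFieldType) (n : nat) (w c : 'I_n -> R) (A : {set 'I_n}) : R :=
  if A == set0 then 0 else (\sum_(i in A) w i) / (\sum_(i in A) c i).

(* numerator of J: sum_i c_{s_i} (1 - sum_{j<i} w_{s_j}); acc = sum of earlier weights *)
Fixpoint Jnum (R : realFieldType) (n : nat) (w c : 'I_n -> R) (acc : R) (s : seq 'I_n) : R :=
  match s with
  | [::] => 0
  | x :: s' => c x * (1 - acc) + Jnum w c (acc + w x) s'
  end.

(* extended reals [.., +oo]: None = +oo *)
Definition J (R : realFieldType) (n : nat) (w c : 'I_n -> R) (s : seq 'I_n) : option R :=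
  let D := \sum_(x <- s) w x in
  if 0 < D then Some (Jnum w c 0 s / D) else None.

Definition Jplus (R : realFieldType) (n : nat) (w c : 'I_n -> R) (s : seq 'I_n) : option R :=
  match J w c s with Some x => Some (Num.max 0 x) | None => None end.

Definition le_ext (R : realFieldType) (a b : option R) : bool :=
  match a, b with
  | _, None => true
  | None, Some _ => false
  | Some x, Some y => x <= y
  end.

(* Sidney decomposition (A_1,...,A_k) = P (A_{i+1} = nth set0 P i) *)
Definition sidney (R : realFieldType) (n : nat) (e : rel 'I_n) (w c : 'I_n -> R)
    (P : seq {set 'I_n}) : Prop :=
  [/\ forall A, A \in P -> A != set0,
      forall i j, (i < j < size P)%N -> [disjoint nth set0 P i & nth set0 P j],
      \bigcup_(A <- P) A = [set: 'I_n] &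
      forall i, (i < size P)%N ->
        let Rest := \bigcup_(A <- drop i P) A in
        initial_in e Rest (nth set0 P i) /\
        forall X, initial_in e Rest X -> density w c X <= density w c (nth set0 P i)].

From HB Require Import structures.
From mathcomp Require Import all_boot all_order all_algebra.
From mathcomp Require Import ring lra zify.
From Stdlib Require Import Classical.
Set Implicit Arguments. Unset Strict Implicit. Unset Printing Implicit Defensive.
Import Order.TTheory GRing.Theory Num.Theory.
Local Open Scope ring_scope.

(* Let mu be the least value of J^+ over the finitely many searches, attained
   at m.  If mu = +oo every search is optimal.  Otherwise the linearized cost
   Jnum s - mu * W s is nonpositive at m, and it suffices to turn m into a
   search whose support is some A_1 :|: ... :|: A_i (i >= 1) without increasing
   this cost.  This is done block by block.  If the current search covers
   A = A_1, moving the elements of A to the front does not increase the cost,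
   because A is an initial set of maximum density, and the remaining part is
   handled by induction on the tail of the decomposition.  If the search misses
   a part r of A, then either appending r does not increase the cost, or r,
   which is at least as dense as A, forces the cost to be positive. *)

Section Searches.
Variables (n : nat) (e : rel 'I_n).

Definition before (s : seq 'I_n) (u v : 'I_n) :=
  exists s1 s2, s = s1 ++ v :: s2 /\ u \in s1.

Lemma before_mem s u v : before s u v -> u \in s.
Proof. by case=> [s1 [s2 [-> us1]]]; rewrite mem_cat us1. Qed.

Lemma before_filter (a : pred 'I_n) s u v :
  before s u v -> a u -> a v -> before (filter a s) u v.
Proof.
case=> [s1 [s2 [-> us1]]] au av; exists (filter a s1), (filter a s2).
by rewrite filter_cat /= av mem_filter au.
Qed.

Lemma search_onP (B : {set 'I_n}) s :
  search_on e B s <->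
  [/\ uniq s, all (fun x => x \in B) s &
      forall v u, v \in s -> u \in B -> e u v -> before s u v].
Proof.
split=> [[us sB sE] | [us sB sE]].
  split=> // v u vs uB euv; case/splitPr: vs sE => s1 s2 sE.
  by exists s1, s2; split=> //; apply: sE uB euv.
split=> // s1 v s2 Es u uB euv.
have [|t1 [t2 [Et ut1]]] := sE v u _ uB euv; first by rewrite Es mem_cat mem_head orbT.
have take_index p q : uniq (p ++ v :: q) -> take (index v (p ++ v :: q)) (p ++ v :: q) = p.
  rewrite cat_uniq /= => /and3P [_ /norP [vp _] _].
  by rewrite index_cat (negbTE vp) /= eqxx addn0 take_size_cat.
have -> : s1 = take (index v s) s by rewrite Es take_index // -Es.
by rewrite Et take_index // -Et.
Qed.

Lemma search_nil (B : {set 'I_n}) : search_on e B [::].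
Proof. by split=> // s1 v s2; case: s1. Qed.

Lemma search_prefix (B : {set 'I_n}) p q : search_on e B (p ++ q) -> search_on e B p.
Proof.
case; rewrite cat_uniq all_cat => /andP [up _] /andP [pB _] pE.
by split=> // s1 v s2 Ep; apply: (pE s1 v (s2 ++ q)); rewrite Ep -catA.
Qed.

Lemma search_filter (B B' : {set 'I_n}) s (a : pred 'I_n) :
  search_on e B s ->
  (forall x, x \in s -> a x -> x \in B') ->
  (forall v u, v \in s -> a v -> u \in B' -> e u v -> (u \in B) && a u) ->
  search_on e B' (filter a s).
Proof.
move=> /search_onP [us _ sE] sB' closed; apply/search_onP; split.
- exact: filter_uniq.
- by apply/allP => x; rewrite mem_filter => /andP [ax xs]; apply: sB'.
move=> v u; rewrite mem_filter => /andP [av vs] uB' euv.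
case/andP: (closed v u vs av uB' euv) => uB au.
exact: before_filter (sE v u vs uB euv) au av.
Qed.

Lemma search_cat (B : {set 'I_n}) s1 s2 :
  search_on e B s1 -> uniq (s1 ++ s2) -> all (fun x => x \in B) s2 ->
  (forall v u, v \in s2 -> u \in B -> e u v -> u \in s1 \/ before s2 u v) ->
  search_on e B (s1 ++ s2).
Proof.
move=> /search_onP [_ s1B s1E] u12 s2B s2E; apply/search_onP; split=> //.
  by rewrite all_cat s1B.
move=> v u; rewrite mem_cat => /orP [vs1 | vs2] uB euv.
  have [t1 [t2 [-> ut1]]] := s1E v u vs1 uB euv.
  by exists t1, (t2 ++ s2); rewrite -catA.
case: (s2E v u vs2 uB euv) => [us1 | [t1 [t2 [-> ut1]]]].
  case/splitPr: vs2 => p1 p2; exists (s1 ++ p1), p2.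
  by rewrite catA mem_cat us1.
by exists (s1 ++ t1), t2; rewrite catA mem_cat ut1 orbT.
Qed.

Lemma search_closed (B : {set 'I_n}) s v u :
  search_on e B s -> v \in s -> u \in B -> e u v -> u \in s.
Proof. by case/search_onP=> _ _ sE vs uB /(sE v u vs uB); apply: before_mem. Qed.

End Searches.

Lemma sum_filterC (V : nmodType) (T : eqType) (a : pred T) (F : T -> V) s :
  \sum_(x <- s) F x = \sum_(x <- filter a s) F x + \sum_(x <- filter (predC a) s) F x.
Proof. by rewrite -big_cat; apply: perm_big; rewrite perm_sym perm_filterC. Qed.

Section Weights.
Variables (R : realFieldType) (n : nat) (w c : 'I_n -> R).
Hypotheses (hw : forall i, 0 <= w i) (hc : forall i, 0 < c i).

Local Notation W s := (\sum_(x <- s) w x).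
Local Notation C s := (\sum_(x <- s) c x).
Local Notation N := (Jnum w c).

Lemma Wsum_ge0 s : 0 <= W s.
Proof. exact: sumr_ge0. Qed.

Lemma Csum_ge0 s : 0 <= C s.
Proof. by apply: sumr_ge0 => i _; apply: ltW. Qed.

Lemma Csum_gt0 s : s != [::] -> 0 < C s.
Proof. by case: s => // x s _; rewrite big_cons ltr_pwDl ?Csum_ge0. Qed.

Lemma Jnum_shift acc s : N acc s = N 0 s - acc * C s.
Proof.
elim: s acc => [|x s IH] acc /=; first by rewrite big_nil mulr0 subr0.
by rewrite big_cons IH [N (0 + w x) s]IH; lra.
Qed.

Lemma Jnum_cat acc s1 s2 : N acc (s1 ++ s2) = N acc s1 + N (acc + W s1) s2.
Proof.
elim: s1 acc => [|x s1 IH] acc /=; first by rewrite big_nil addr0 add0r.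
by rewrite IH big_cons !addrA.
Qed.

Lemma Jnum_cat0 s1 s2 : N 0 (s1 ++ s2) = N 0 s1 + N 0 s2 - W s1 * C s2.
Proof. by rewrite Jnum_cat add0r [N (W s1) s2]Jnum_shift addrA. Qed.

Lemma Jnum_ge acc s : (1 - acc - W s) * C s <= N acc s.
Proof.
elim: s acc => [|x s IH] acc /=; first by rewrite !big_nil mulr0.
rewrite !big_cons.
have := IH (acc + w x); have := hw x; have := hc x; have := Wsum_ge0 s.
have : 0 <= c x * (w x + W s) by rewrite mulr_ge0 ?addr_ge0 ?Wsum_ge0 ?hw ?ltW ?hc.
lra.
Qed.

Lemma Jnum_le acc s : N acc s <= (1 - acc) * C s.
Proof.
elim: s acc => [|x s IH] acc /=; first by rewrite big_nil mulr0.
rewrite big_cons; have := IH (acc + w x).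
have : 0 <= w x * C s by rewrite mulr_ge0 ?Csum_ge0.
lra.
Qed.

Section Exchange.
Variables (a : pred 'I_n) (rho : R).

(* Since N 0 s = C s - sum over pairs (x before y) of w x * c y, moving the
   elements of a to the front changes N by the sum of w y c x - w x c y over
   the pairs x \notin a before y \in a; splitting each term as
   c x (w y - rho c y) + c y (rho c x - w x) gives the two defects below. *)
Fixpoint suffix_excess s :=
  if s is x :: s' then
    (if a x then 0 else c x * (W (filter a s') - rho * C (filter a s')))
    + suffix_excess s'
  else 0.

Fixpoint prefix_deficit s :=
  if s is x :: s' then
    (if a x then 0 else C (filter a s') * (rho * c x - w x)) + prefix_deficit s'
  else 0.

Lemma Jnum_exchange s :
  N 0 s = N 0 (filter a s ++ filter (predC a) s) + suffix_excess s + prefix_deficit s.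
Proof.
elim: s => [|x s IH] /=; first by rewrite !addr0.
have hC := sum_filterC a c s.
case: (a x) => /=.
- rewrite [N (0 + w x) s]Jnum_shift [N (0 + w x) _]Jnum_shift IH big_cat /= -hC; ring.
- rewrite [N (0 + w x) s]Jnum_shift IH !Jnum_cat0 /= [N (0 + w x) _]Jnum_shift big_cons hC; ring.
Qed.

Lemma suffix_excess_ge0 s :
  (forall p q, s = p ++ q -> rho * C (filter a q) <= W (filter a q)) ->
  0 <= suffix_excess s.
Proof.
elim: s => [|x s IH] dense //=.
rewrite addr_ge0 ?IH //; last by move=> p q E; apply: (dense (x :: p) q); rewrite E.
case: (a x) => //; apply: mulr_ge0; first exact: ltW.
by rewrite subr_ge0; apply: (dense [:: x] s).
Qed.

Lemma prefix_deficit_rcons p x :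
  prefix_deficit (rcons p x) = prefix_deficit p +
    (if a x then c x * (rho * C (filter (predC a) p) - W (filter (predC a) p)) else 0).
Proof.
elim: p => [|y p IH] /=; first by case: (a x); rewrite /= !big_nil; ring.
rewrite IH filter_rcons; case: (a y); case: (a x);
  rewrite /= -?cats1 ?big_cat ?big_cons ?big_nil /=; ring.
Qed.

Lemma prefix_deficit_ge0 s :
  (forall p q, s = p ++ q -> W (filter (predC a) p) <= rho * C (filter (predC a) p)) ->
  0 <= prefix_deficit s.
Proof.
elim/last_ind: s => [|s x IH] sparse //.
rewrite prefix_deficit_rcons addr_ge0 ?IH //.
  by move=> p q E; apply: (sparse p (rcons q x)); rewrite E rcons_cat.
case: (a x) => //; apply: mulr_ge0; first exact: ltW.
by rewrite subr_ge0; apply: (sparse s [:: x]); rewrite cats1.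
Qed.

Lemma Jnum_front acc s :
  (forall p q, s = p ++ q -> rho * C (filter a q) <= W (filter a q)) ->
  (forall p q, s = p ++ q -> W (filter (predC a) p) <= rho * C (filter (predC a) p)) ->
  N acc (filter a s ++ filter (predC a) s) <= N acc s.
Proof.
move=> dense sparse.
rewrite Jnum_shift [N acc s]Jnum_shift big_cat /= -sum_filterC.
have := Jnum_exchange s; have := suffix_excess_ge0 dense.
have := prefix_deficit_ge0 sparse; lra.
Qed.

End Exchange.

(* For [W s > 0], [J s <= lam] iff [Jlin lam 0 s <= 0]; [acc] is the weight
   already searched before [s]. *)
Definition Jlin lam acc s := N acc s - lam * W s.

Lemma Jlin_cat lam acc s1 s2 :
  Jlin lam acc (s1 ++ s2) = Jlin lam acc s1 + Jlin lam (acc + W s1) s2.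
Proof. by rewrite /Jlin Jnum_cat big_cat /=; ring. Qed.

Lemma Jlin_nil lam acc : Jlin lam acc [::] = 0.
Proof. by rewrite /Jlin big_nil mulr0 subr0. Qed.

End Weights.

Lemma sum_set (V : nmodType) (T : finType) (F : T -> V) s :
  uniq s -> \sum_(x <- s) F x = \sum_(x in [set x in s]) F x.
Proof. by move=> us; rewrite big_uniq //; apply: eq_bigl => x; rewrite inE. Qed.

Lemma set_seq_eq0 (T : finType) (s : seq T) : ([set x in s] == set0) = (s == [::]).
Proof.
case: s => [|x s]; first by apply/eqP/setP => y; rewrite !inE.
by apply/negbTE/set0Pn; exists x; rewrite inE mem_head.
Qed.

Section Density.
Variables (R : realFieldType) (n : nat) (e : rel 'I_n) (w c : 'I_n -> R).
Hypothesis hc : forall i, 0 < c i.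

Local Notation W s := (\sum_(x <- s) w x).
Local Notation C s := (\sum_(x <- s) c x).

Lemma Wsum_density s : uniq s -> W s = density w c [set x in s] * C s.
Proof.
move=> us; rewrite /density set_seq_eq0.
case: eqP => [-> | /eqP s0]; first by rewrite !big_nil mulr0.
by rewrite -!sum_set // divfK // gt_eqF // Csum_gt0.
Qed.

Lemma Wsum_le_density (B : {set 'I_n}) rho s :
  (forall X, initial_in e B X -> density w c X <= rho) ->
  search_on e B s -> W s <= rho * C s.
Proof.
move=> hmax ss; have [us _ _] := ss.
rewrite (Wsum_density us) ler_wpM2r ?Csum_ge0 //.
exact: hmax (ex_intro _ s (conj ss erefl)).
Qed.

End Density.

Section Chain.
Variables (R : realFieldType) (n : nat) (e : rel 'I_n) (w c : 'I_n -> R).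
Hypotheses (hw : forall i, 0 <= w i) (hc : forall i, 0 < c i).

Local Notation W s := (\sum_(x <- s) w x).
Local Notation C s := (\sum_(x <- s) c x).
Local Notation cup l := (\bigcup_(X <- l) X).

Fixpoint sidney_chain (l : seq {set 'I_n}) : Prop :=
  if l is A :: l' then
    [/\ A != set0, [disjoint A & cup l'], initial_in e (A :|: cup l') A,
        forall X, initial_in e (A :|: cup l') X -> density w c X <= density w c A
      & sidney_chain l']
  else True.

Lemma sidney_chain_of P : sidney e w c P -> sidney_chain P.
Proof.
case=> P0 Pdis _ Pmax.
suff chain_drop k i : (size P - i)%N = k -> sidney_chain (drop i P).
  by rewrite -[P]drop0; apply: chain_drop.
elim: k i => [|k IH] i Pi; first by rewrite drop_oversize //; lia.
have iP : (i < size P)%N by lia.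
have [] := Pmax i iP; rewrite (drop_nth set0 iP) big_cons /= => Pi_init Pi_max.
split=> //; [exact/P0/mem_nth | | apply: IH; lia].
rewrite -setI_eq0 big_distrr big1_seq //= => X /(nthP set0) [j].
rewrite size_drop nth_drop => jP <-; apply/eqP; rewrite setI_eq0 Pdis //.
by rewrite -ltn_subRL jP leq_addr.
Qed.

Definition improvable lam (l : seq {set 'I_n}) := forall acc s,
  search_on e (cup l) s -> exists i t,
    [/\ (i <= size l)%N, search_on e (cup l) t, [set x in t] = cup (take i l)
      & Jlin w c lam acc t <= Jlin w c lam acc s].

Section Block.
Variables (A : {set 'I_n}) (l : seq {set 'I_n}) (a : seq 'I_n) (lam : R).
Hypotheses (sa : search_on e (A :|: cup l) a) (Ea : [set x in a] = A)
  (Adis : [disjoint A & cup l])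
  (Amax : forall X, initial_in e (A :|: cup l) X -> density w c X <= density w c A)
  (lam0 : 0 <= lam).

Local Notation B := (A :|: cup l).
Local Notation rho := (density w c A).

Lemma Wsum_block : W a = rho * C a.
Proof. by rewrite -Ea; apply: Wsum_density; case: sa. Qed.

Lemma search_front s : search_on e B s -> search_on e B [seq x <- s | x \in A].
Proof.
move=> ss; apply: (search_filter ss) => [x xs _ | v u _ vA uB euv].
  by case: ss => _ /allP sB _; apply: sB.
rewrite uB -Ea inE; apply: search_closed sa _ uB euv; by rewrite -Ea inE in vA.
Qed.

Lemma search_back s :
  search_on e B s -> search_on e (cup l) [seq x <- s | x \notin A].
Proof.
move=> ss; apply: (search_filter ss) => [x xs xA | v u _ _ ul euv].
  by case: ss => _ /allP /(_ x xs); rewrite inE (negbTE xA).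
by rewrite inE ul orbT (disjointFl Adis ul).
Qed.

Lemma Jlin_front acc s : search_on e B s -> A \subset [set x in s] ->
  Jlin w c lam acc ([seq x <- s | x \in A] ++ [seq x <- s | x \notin A])
    <= Jlin w c lam acc s.
Proof.
move=> ss As; have [us _ _] := ss.
rewrite /Jlin big_cat /= -sum_filterC lerD2r.
(* The A-part of s enumerates A while that of a prefix is an initial set, so
   the A-part of every suffix is at least as dense as A; appending the other
   part of a prefix to a gives an initial set, so that part is at most as
   dense as A. *)
apply: (@Jnum_front _ _ w c hc _ rho) => p q Es;
  have sp : search_on e B p by apply: (@search_prefix _ _ _ _ q); rewrite -Es.
- have sA : [set x in [seq x <- s | x \in A]] = A.
    apply/setP => x; rewrite inE mem_filter; case: (boolP (x \in A)) => //= xA.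
    by have := subsetP As x xA; rewrite inE.
  have := Wsum_density w hc (filter_uniq (fun x => x \in A) us); rewrite sA.
  have := Wsum_le_density hc Amax (search_front sp).
  by rewrite Es !filter_cat !big_cat /=; lra.
- have sap : search_on e B (a ++ [seq x <- p | x \notin A]).
    apply: search_cat => //.
    + rewrite cat_uniq filter_uniq ?andbT; last by case: sp.
      have [-> _ _] := sa; apply/hasPn => x; rewrite mem_filter -Ea inE.
      by case/andP.
    + by apply/allP => x; rewrite mem_filter => /andP [_]; case: sp => _ /allP sB _; apply: sB.
    + move=> v u; rewrite mem_filter => /andP [vA vp] uB euv.
      case: (boolP (u \in A)) => uA; first by left; rewrite -Ea inE in uA.
      by right; case/search_onP: sp => _ _ /(_ v u vp uB euv) /before_filter; apply.
  have := Wsum_le_density hc Amax sap; rewrite big_cat /= Wsum_block big_cat /=; lra.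
Qed.

Lemma improve_cover : improvable lam l -> forall acc s,
  search_on e B s -> A \subset [set x in s] -> exists i t,
    [/\ (0 < i <= (size l).+1)%N, search_on e B t,
        [set x in t] = cup (take i (A :: l)) & Jlin w c lam acc t <= Jlin w c lam acc s].
Proof.
move=> IH acc s ss As; have [us _ _] := ss.
have inL x : (x \in [seq x <- s | x \in A]) = (x \in A).
  rewrite mem_filter; case: (boolP (x \in A)) => // xA.
  by have := subsetP As x xA; rewrite inE.
have [j [t [jl st Et Jt]]] := IH (acc + W [seq x <- s | x \in A]) _ (search_back ss).
have [ut /allP tl tE] := st.
have tA x : x \in t -> x \notin A by move/tl/(disjointFl Adis) => ->.
exists j.+1, ([seq x <- s | x \in A] ++ t); split => //.
- apply: search_cat (search_front ss) _ _ _ => [| | v u vt uB euv].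
  + rewrite cat_uniq filter_uniq // ut andbT; apply/hasPn => x /tA.
    by rewrite inL.
  + by apply/allP => x /tl; rewrite inE => ->; rewrite orbT.
  + case: (boolP (u \in A)) => uA; first by left; rewrite inL.
    by right; case/search_onP: st => _ _; apply => //; move: uB; rewrite inE (negbTE uA).
- apply/setP => x; rewrite /= big_cons -Et !inE mem_cat inL.
  by case: (boolP (x \in A)) => //= /negbTE xA; rewrite inE.
- apply: le_trans (Jlin_front acc ss As).
  by rewrite !Jlin_cat lerD2l.
Qed.

Lemma cover_or_positive acc s : search_on e B s ->
  (exists s', [/\ search_on e B s', A \subset [set x in s']
                & Jlin w c lam acc s' <= Jlin w c lam acc s])
  \/ 0 <= Jlin w c lam acc s /\ (s != [::] -> 0 < Jlin w c lam acc s).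
Proof.
move=> ss; case: (boolP (A \subset [set x in s])) => [As | sA].
  by left; exists s; split.
have [us /allP sB _] := ss; have [ua /allP aB _] := sa.
set r := [seq x <- a | x \notin s].
have ssr : search_on e B (s ++ r).
  apply: search_cat => // [| | v u].
  - by rewrite cat_uniq us filter_uniq // andbT; apply/hasPn => x; rewrite mem_filter => /andP [].
  - by apply/allP => x; rewrite mem_filter => /andP [_ /aB].
  - rewrite mem_filter => /andP [vs va] uB euv.
    case: (boolP (u \in s)) => us'; [by left | right].
    by case/search_onP: sa => _ _ /(_ v u va uB euv) /before_filter; apply.
case: (lerP (Jlin w c lam (acc + W s) r) 0) => Jr.
  left; exists (s ++ r); split => //; last by rewrite Jlin_cat; lra.
  apply/subsetP => x; rewrite -Ea !inE mem_cat mem_filter => ->.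
  by case: (x \in s).
right.
have r0 : r != [::].
  case/subsetPn: sA => x; rewrite -Ea !inE => xa xs.
  by apply/eqP => r0; have := mem_filter (fun x => x \notin s) x a; rewrite -/r r0 xa xs.
have r_dense : rho * C r <= W r.
  have sas : search_on e B [seq x <- a | x \in s].
    apply: (search_filter sa) => [x _ xs | v u _ vs uB euv]; first exact: sB.
    by rewrite uB (search_closed ss vs uB euv).
  have := Wsum_le_density hc Amax sas; have := Wsum_block.
  rewrite (sum_filterC (fun x => x \in s) w a) (sum_filterC (fun x => x \in s) c a).
  lra.
have gap : lam * rho < 1 - (acc + W s).
  have := Jnum_le hw hc (acc + W s) r.
  have : lam * (rho * C r) <= lam * W r by rewrite ler_wpM2l.
  move: Jr; rewrite /Jlin => Jr Wr Nr.
  have : 0 < (1 - (acc + W s) - lam * rho) * C r by lra.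
  by rewrite pmulr_lgt0 ?Csum_gt0 //; lra.
have Js : (1 - (acc + W s) - lam * rho) * C s <= Jlin w c lam acc s.
  have := Jnum_ge hw hc acc s.
  have : lam * W s <= lam * (rho * C s) by rewrite ler_wpM2l // (Wsum_le_density hc Amax ss).
  rewrite /Jlin; lra.
split=> [|s0].
- by apply: le_trans Js; rewrite mulr_ge0 ?Csum_ge0 // subr_ge0 ltW.
- by apply: lt_le_trans Js; rewrite mulr_gt0 ?Csum_gt0 // subr_gt0.
Qed.

End Block.

Lemma sidney_chain_improvable lam l : 0 <= lam -> sidney_chain l -> improvable lam l.
Proof.
move=> lam0; elim: l => [_ acc s | A l IH /= [A0 Adis [a [sa Ea]] Amax /IH {}IH] acc s].
  case: s => [|x s]; last by case=> _ /andP []; rewrite big_nil inE.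
  exists 0%N, [::]; split => //.
  by rewrite take0 big_nil; apply/eqP; rewrite set_seq_eq0.
rewrite big_cons => ss.
case: (cover_or_positive sa Ea Amax lam0 acc ss) => [[s' [ss' As' Js']] | [Js _]].
  have [i [t [/andP [_ il] st Et Jt]]] := improve_cover sa Ea Adis Amax IH acc ss' As'.
  by exists i, t; split => //; apply: le_trans Js'.
exists 0%N, [::]; split => //; first exact: search_nil.
  by rewrite take0 big_nil; apply/eqP; rewrite set_seq_eq0.
by rewrite Jlin_nil.
Qed.

Lemma improve_nonpositive lam acc P s : 0 <= lam -> sidney_chain P ->
  search_on e (cup P) s -> s != [::] -> Jlin w c lam acc s <= 0 -> exists i t,
    [/\ (0 < i <= size P)%N, t != [::], search_on e (cup P) t,
        [set x in t] = cup (take i P) & Jlin w c lam acc t <= Jlin w c lam acc s].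
Proof.
move=> lam0; case: P => [_ | A l [A0 Adis [a [sa Ea]] Amax /sidney_chain_improvable IH]].
  by case: s => // x s [_ /andP []]; rewrite big_nil inE.
rewrite big_cons => ss s0 Js.
case: (cover_or_positive sa Ea Amax lam0 acc ss) => [[s' [ss' As' Js']] | [_ /(_ s0)]];
  last by rewrite ltNge Js.
have [i [t [i0 st Et Jt]]] := improve_cover sa Ea Adis Amax (IH lam lam0) acc ss' As'.
exists i, t; split => //; last exact: le_trans Js'.
rewrite -set_seq_eq0 Et; case: i i0 {Et} => // i _.
by rewrite /= big_cons; case/set0Pn: A0 => x xA; apply/set0Pn; exists x; rewrite inE xA.
Qed.

End Chain.

Section Objective.
Variables (R : realFieldType) (n : nat) (w c : 'I_n -> R).
Hypotheses (hw : forall i, 0 <= w i) (hc : forall i, 0 < c i).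

Lemma Jplus_Some_Jlin m mu : Jplus w c m = Some mu ->
  [/\ 0 <= mu, m != [::] & Jlin w c mu 0 m <= 0].
Proof.
rewrite /Jplus /J; case: ifP => // Wm [<-]; split.
- by rewrite le_max lexx.
- by apply: contraTneq Wm => ->; rewrite big_nil ltxx.
- by rewrite /Jlin subr_le0 -ler_pdivrMr // le_max lexx orbT.
Qed.

Lemma Jplus_le_Jlin t mu : 0 <= mu -> t != [::] -> Jlin w c mu 0 t <= 0 ->
  le_ext (Jplus w c t) (Some mu).
Proof.
move=> mu0 t0; rewrite /Jlin subr_le0 => Jt.
have Wt : 0 < \sum_(x <- t) w x.
  rewrite lt_def Wsum_ge0 // andbT; apply/eqP => W0; move: Jt.
  have := Jnum_ge hw hc 0 t; have := Csum_gt0 hc t0; rewrite W0; lra.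
by rewrite /Jplus /J Wt /= ge_max mu0 ler_pdivrMr.
Qed.

End Objective.

Section Argmin.
Variables (R : realFieldType) (n : nat).

Lemma le_ext_refl (a : option R) : le_ext a a.
Proof. by case: a => /=. Qed.

Lemma le_ext_trans (a b d : option R) : le_ext a b -> le_ext b d -> le_ext a d.
Proof. by case: a; case: b; case: d => //= x y z; apply: le_trans. Qed.

Lemma le_ext_total (a b : option R) : le_ext a b || le_ext b a.
Proof. by case: a; case: b => //= x y; apply: le_total. Qed.

Lemma exists_le_ext_min (T : eqType) (L : seq T) (P : T -> Prop) (f : T -> option R) :
  (exists2 x, x \in L & P x) ->
  exists2 m, P m & forall y, y \in L -> P y -> le_ext (f m) (f y).
Proof.
elim: L => [|x L IH]; first by case=> y; rewrite in_nil.
case=> y; rewrite inE.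
have [/IH [m Pm m_min] | noL] := classic (exists2 z, z \in L & P z); last first.
  case/orP=> [/eqP -> Px | yL Py]; last by case: noL; exists y.
  exists x => // z; rewrite inE => /orP [/eqP -> _ | zL Pz]; first exact: le_ext_refl.
  by case: noL; exists z.
move=> _ _; have [Px | nPx] := classic (P x); last first.
  by exists m => // z; rewrite inE => /orP [/eqP -> /nPx | /m_min].
have [mx | xm] := orP (le_ext_total (f m) (f x)).
  by exists m => // z; rewrite inE => /orP [/eqP -> | /m_min].
exists x => // z; rewrite inE => /orP [/eqP -> _ | zL Pz]; first exact: le_ext_refl.
exact: le_ext_trans xm (m_min z zL Pz).
Qed.

Fixpoint seqs_upto (k : nat) : seq (seq 'I_n) :=
  if k is k'.+1 then [::] :: [seq x :: s | x <- enum 'I_n, s <- seqs_upto k']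
  else [:: [::]].

Lemma mem_seqs_upto k s : (size s <= k)%N -> s \in seqs_upto k.
Proof.
elim: k s => [|k IH] [|x s] //= sk; rewrite inE; apply/orP; right.
by apply/allpairsP; exists (x, s); rewrite mem_enum IH.
Qed.

Lemma search_argmin (e : rel 'I_n) (f : seq 'I_n -> option R) :
  exists2 m, search e m & forall t, search e t -> le_ext (f m) (f t).
Proof.
have [|m sm m_min] := @exists_le_ext_min _ (seqs_upto n) (search e) f.
  by exists [::]; [apply: mem_seqs_upto | apply: search_nil].
exists m => // t st; have [ut _ _] := st; apply: m_min st; apply: mem_seqs_upto.
rewrite -(card_uniqP ut) -[n in (_ <= n)%N]card_ord.
exact: max_card.
Qed.

End Argmin.

Theorem mainTheorem3 (R : realFieldType) (n : nat) (e : rel 'I_n)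
  (hn : (0 < n)%N) (hG : acyclic e)
  (w c : 'I_n -> R) (hw : forall i, 0 <= w i) (hc : forall i, 0 < c i)
  (P : seq {set 'I_n}) (hP : sidney e w c P) :
  exists i : nat, (1 <= i <= size P)%N /\
    exists s : seq 'I_n, [/\ search e s,
      [set x in s] = \bigcup_(A <- take i P) A &
      forall t, search e t -> le_ext (Jplus w c s) (Jplus w c t)].
Proof.
have [m sm m_min] := search_argmin e (Jplus w c).
have chain := sidney_chain_of hP; have [_ _ cupP _] := hP.
rewrite /search -cupP in sm m_min *.
case Jm: (Jplus w c m) => [mu|].
  have [mu0 m0 Jlin_m] := Jplus_Some_Jlin Jm.
  have [i [t [iP t0 st Et Jt]]] := improve_nonpositive hw hc mu0 chain sm m0 Jlin_m.
  exists i; split => //; exists t; split => // y sy.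
  apply: le_ext_trans (m_min y sy); rewrite Jm.
  by apply: Jplus_le_Jlin => //; apply: le_trans Jlin_m.
case: P hP chain cupP sm m_min => [_ _ cupP | A l _ [_ _ [a [sa Ea]] _ _] _ _ m_min].
  by have := in_setT (Ordinal hn); rewrite -cupP big_nil inE.
exists 1%N; split => //; exists a; split.
- by rewrite big_cons.
- by rewrite Ea /= take0 big_seq1.
- by move=> y /m_min; rewrite Jm; apply: le_ext_trans; case: Jplus.
Qed.
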